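(* Let $q\ge 2$ and $n\ge 2$ be integers and let $m=n-1$. Under uniform transmission over the $1$-deletion channel with input length $n$, $$\min_{{\boldsymbol y}\in\Sigma_q^{m}} \mathsf{H}^{\mathsf{In}}_{1\text{-}\mathsf{Del}}({\boldsymbol y}) = \log_2(nq)-\frac{\log_2 n}{q},$$ and this minimum is attained only by channel outputs having a single run (constant sequences).
   Context: $\Sigma_q=\{0,1,\dots,q-1\}$. For sequences ${\boldsymbol x}$ of length $N$ and ${\boldsymbol y}$ of length $\ell\le N$, the embedding number $\omega_{{\boldsymbol y}}({\boldsymbol x})$ is the number of index tuples $1\le i_1<\dots<i_\ell\le N$ with $x_{i_j}=y_j$ for all $j$. The $k$-deletion channel with input length $n$ maps ${\boldsymbol x}\in\Sigma_q^n$ to ${\boldsymbol y}\in\Sigma_q^{n-k}$ with probability $\Pr\{{\boldsymbol y}\mid{\boldsymbol x}\}=\omega_{{\boldsymbol y}}({\boldsymbol x})/\binom{n}{k}$. Under uniform transmission, the input $X$ is uniform on $\Sigma_q^n$, and for an output ${\boldsymbol y}$ the input entropy is $\mathsf{H}^{\mathsf{In}}_{k\text{-}\mathsf{Del}}({\boldsymbol y})=H(X\mid Y={\boldsymbol y})=-\sum_{{\boldsymbol x}}P({\boldsymbol x}\mid{\boldsymbol y})\log_2 P({\boldsymbol x}\mid{\boldsymbol y})$ where $P({\boldsymbol x}\mid {\boldsymbol y})=\Pr\{{\boldsymbol y}\mid{\boldsymbol x}\}/\sum_{{\boldsymbol x}'\in\Sigma_q^n}\Pr\{{\boldsymbol y}\mid{\boldsymbol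 x}'\}$. A run of a sequence is a maximal block of identical consecutive symbols. *)

From HB Require Import structures.
From mathcomp Require Import all_boot all_order all_algebra.
From mathcomp Require Import reals exp.
Set Implicit Arguments. Unset Strict Implicit. Unset Printing Implicit Defensive.
Import Order.TTheory GRing.Theory Num.Theory.
Local Open Scope ring_scope.

(* Sequences over Sigma_q = {0,..,q-1} of length N are N.-tuple 'I_q. *)

Definition emb (q N l : nat) (x : N.-tuple 'I_q) (y : l.-tuple 'I_q) : nat :=
  #|[set f : {ffun 'I_l -> 'I_N} |
      [forall i : 'I_l, forall j : 'I_l, (i < j)%N ==> (f i < f j)%N] &&
      [forall j : 'I_l, tnth x (f j) == tnth y j]]|.

Definition log2 (R : realType) (x : R) : R := ln x / ln 2.

Definition delPr (R : realType) (q n k : nat)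
  (y : (n - k).-tuple 'I_q) (x : n.-tuple 'I_q) : R :=
  (emb x y)%:R / ('C(n, k))%:R.

(* Posterior P(x | y) under uniform input. *)
Definition post (R : realType) (q n k : nat)
  (y : (n - k).-tuple 'I_q) (x : n.-tuple 'I_q) : R :=
  delPr R y x / \sum_(x' : n.-tuple 'I_q) delPr R y x'.

Definition Hin (R : realType) (q n k : nat) (y : (n - k).-tuple 'I_q) : R :=
  - \sum_(x : n.-tuple 'I_q)
      (if post R y x == 0 then 0 else post R y x * log2 (post R y x)).

From HB Require Import structures.
From mathcomp Require Import all_boot all_order all_algebra.
From mathcomp Require Import reals exp.
From mathcomp Require Import zify ring.
Set Implicit Arguments. Unset Strict Implicit. Unset Printing Implicit Defensive.
Import Order.TTheory GRing.Theory Num.Theory.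

(** The input [x] yields the output [y] through deletion at position [i]
  exactly when [x] is [y] with one symbol inserted at [i], so the embedding
  numbers [e_x] sum to [n q], the posterior is [e_x / (n q)], and
  [H(X | y) = log2 (n q) - log2 (prod_x e_x ^ e_x) / (n q)].
  Among the positions of [x] that delete to [y], every one but the first is
  preceded by an equal symbol, and such a position [i] determines [x]; hence
  [sum_x (e_x - 1) <= n - 1].  Since [f t = (t + 1) ^ (t + 1)] satisfies
  [f a * f b <= f (a + b)], strictly when [a, b > 0], and [e ^ e = f (e - 1)],
  we get [prod_x e_x ^ e_x <= n ^ n], with equality iff some
  [e_x = n], i.e. every deletion of [x] gives [y], which forces [x] and [y]
  to be constant. *)

Section DeleteInsert.
Context {T : Type}.
Implicit Types (s : seq T) (a : T).

Definition del_nth s i := take i s ++ drop i.+1 s.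
Definition ins_nth s i a := take i s ++ a :: drop i s.

Lemma size_del_nth s i : i < size s -> size (del_nth s i) = (size s).-1.
Proof. by move=> lt_i; rewrite size_cat size_take size_drop lt_i; lia. Qed.

Lemma nth_del_nth (x0 : T) s i j : i < size s ->
  nth x0 (del_nth s i) j = nth x0 s (bump i j).
Proof.
move=> lt_i; rewrite nth_cat size_take lt_i /bump.
case: ltnP => [lt_ji | le_ij]; first by rewrite nth_take // add0n.
by rewrite nth_drop add1n; congr nth; lia.
Qed.

Lemma size_ins_nth s i a : i <= size s -> size (ins_nth s i a) = (size s).+1.
Proof. by move=> le_i; rewrite size_cat /= size_takel // size_drop; lia. Qed.

Lemma nth_ins_nth (x0 : T) s i a : i <= size s -> nth x0 (ins_nth s i a) i = a.
Proof. by move=> le_i; rewrite nth_cat size_takel // ltnn subnn. Qed.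

Lemma ins_nthK s i a : i <= size s -> del_nth (ins_nth s i a) i = s.
Proof.
move=> le_i; rewrite /del_nth take_cat drop_cat size_takel // ltnn ltnNge leqnSn.
by rewrite subnn take0 cats0 subSnn /= drop0 cat_take_drop.
Qed.

Lemma del_nthK (x0 : T) s i : i < size s -> ins_nth (del_nth s i) i (nth x0 s i) = s.
Proof.
move=> lt_i; rewrite /ins_nth /del_nth take_cat drop_cat size_take lt_i ltnn subnn.
by rewrite take0 drop0 cats0 -drop_nth // cat_take_drop.
Qed.

Lemma del_nth_eq_nth_pred (x0 : T) s i j : j < i < size s ->
  del_nth s j = del_nth s i -> nth x0 s i = nth x0 s i.-1.
Proof.
move=> /andP[lt_ji lt_i] /(congr1 (nth x0 ^~ i.-1)).
rewrite !nth_del_nth ?(ltn_trans lt_ji) // /bump.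
have -> : j <= i.-1 by lia.
have -> : i <= i.-1 = false by lia.
by rewrite add1n prednK //; lia.
Qed.

End DeleteInsert.

Lemma increasing_missing_bump l i (F : nat -> nat) : i <= l ->
  (forall j k, j < k < l -> F j < F k) -> (forall k, k < l -> F k <= l) ->
  (forall k, k < l -> F k != i) -> forall j, j < l -> F j = bump i j.
Proof.
move=> le_il incF F_le F_neq.
have gap j k : j <= k < l -> F j + (k - j) <= F k.
  elim: k => [|k IHk]; first by case: j => [_ | //]; rewrite subn0 addn0.
  rewrite leq_eqVlt => /andP[/orP[/eqP -> _ | lt_jk lt_kl]]; first by rewrite subnn addn0.
  by have := IHk; have := incF k k.+1; lia.
have F_ge j : j < l -> j <= F j by have := gap 0 j; lia.
have F_le1 j : j < l -> F j <= j.+1 by have := gap j l.-1; have := F_le l.-1; lia.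
move=> j lt_jl; rewrite /bump; have := F_ge j; have := F_le1 j.
case: (leqP i j) => [le_ij | lt_ji].
- by have := F_neq i; have := F_ge i; have := gap i j; lia.
- by have := F_neq i.-1; have := F_le1 i.-1; have := gap j i.-1; lia.
Qed.

Lemma increasing_ffun_lift l (f : {ffun 'I_l -> 'I_l.+1}) :
  [forall j : 'I_l, forall k : 'I_l, (j < k)%N ==> (f j < f k)%N] ->
  exists i : 'I_l.+1, f = [ffun j => lift i j].
Proof.
move=> /forallP incf.
have [i i_notin_f] : exists i, i \notin codom f.
  apply/existsP; rewrite -negb_forall; apply/forallP => all_in_f.
  have : #|'I_l.+1| <= size (codom f).
    by apply: leq_trans (card_size _); apply/subset_leq_card/subsetP => i _; apply: all_in_f.
  by rewrite size_codom !card_ord ltnn.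
exists i; apply/ffunP => j; apply/val_inj; rewrite ffunE /=.
pose F k := if insub k is Some o then val (f o) else 0.
have FE (o : 'I_l) : F o = f o by rewrite /F valK.
rewrite -FE; apply: (@increasing_missing_bump l i F); last exact: ltn_ord.
- by rewrite -ltnS.
- move=> k1 k2 /andP[lt_k12 lt_k2].
  have lt_k1 := ltn_trans lt_k12 lt_k2.
  by rewrite -[k1]/(val (Ordinal lt_k1)) -[k2]/(val (Ordinal lt_k2)) !FE;
     move: (incf (Ordinal lt_k1)) => /forallP /(_ (Ordinal lt_k2)) /implyP; apply.
- by move=> k lt_k; rewrite -[k]/(val (Ordinal lt_k)) FE -ltnS.
- move=> k lt_k; rewrite -[k]/(val (Ordinal lt_k)) FE.
  by apply: contraNneq i_notin_f => /val_inj <-; apply: codom_f.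
Qed.

(* The length is kept apart from [l.+1] because the channel output length
   [n - 1] does not reduce to [l] when [n = l.+1]. *)
Lemma emb_del_nth q N l (x : N.-tuple 'I_q) (y : l.-tuple 'I_q) : N = l.+1 ->
  emb x y = #|[set i : 'I_N | del_nth x i == y]|.
Proof.
move=> N_eq; subst N; have x0 := tnth x ord0.
pose lift_ffun (i : 'I_l.+1) := [ffun j : 'I_l => lift i j].
have lift_ffun_inj : injective lift_ffun.
  move=> i1 i2 /ffunP eq12; apply/eqP; apply: contraT => neq12.
  case: (unliftP i1 i2) => [j lift_j | eq21]; last by rewrite eq21 eqxx in neq12.
  by have := eq12 j; rewrite !ffunE -lift_j => /eqP; rewrite (negbTE (neq_lift _ _)).
rewrite /emb -(card_imset _ lift_ffun_inj); apply: eq_card => f.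
rewrite inE; apply/andP/imsetP => [[incf /forallP match_f] | [i + ->]].
  have [i f_eq] := increasing_ffun_lift incf; exists i => //; subst f.
  rewrite inE; apply/eqP/(@eq_from_nth _ x0).
    by rewrite size_del_nth !size_tuple.
  move=> j; rewrite size_del_nth ?size_tuple // => lt_jl.
  have := match_f (Ordinal lt_jl); rewrite ffunE !(tnth_nth x0) /= => /eqP <-.
  by rewrite nth_del_nth ?size_tuple.
rewrite inE => /eqP del_i; split.
  by apply/forallP => j; apply/forallP => k; apply/implyP; rewrite !ffunE /= /bump; lia.
apply/forallP => j; rewrite ffunE !(tnth_nth x0) -del_i.
by rewrite nth_del_nth ?size_tuple.
Qed.

Lemma bernoulli_nat c b k : c ^ k * (c + k * b) <= (c + b) ^ k * c.
Proof.
elim: k => [|k IHk]; first by rewrite !expn0 mul0n addn0 mul1n.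
rewrite !expnS.
have step : c * (c + k.+1 * b) <= (c + b) * (c + k * b) by nia.
have := leq_mul (leqnn (c ^ k)) step; have := leq_mul (leqnn (c + b)) IHk.
move: (c ^ k) ((c + b) ^ k) => ck cbk; nia.
Qed.

Definition selfpow t := t.+1 ^ t.+1.

(* Also for [k = 0]: [0 ^ 0 = 1 = selfpow 0]. *)
Lemma expn_selfpow k : k ^ k = selfpow k.-1.
Proof. by case: k. Qed.

Lemma selfpow_gt0 t : 0 < selfpow t.
Proof. by rewrite expn_gt0. Qed.

Lemma leq_selfpow : {mono selfpow : a b / a <= b}.
Proof.
apply: leq_mono => a b lt_ab; apply: (@leq_ltn_trans (a.+1 ^ b.+1)).
  by rewrite leq_pexp2l // ltnW.
by rewrite ltn_exp2r.
Qed.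

Lemma ltn_selfpow : {mono selfpow : a b / a < b}.
Proof. exact: leqW_mono leq_selfpow. Qed.

Lemma leq_selfpow_mulS a b : selfpow a * b.+1 <= (a + b).+1 ^ a.+1.
Proof.
have := bernoulli_nat a.+1 b a.+1.
by rewrite -mulnS -addSn mulnCA [X in _ <= X]mulnC leq_pmul2l.
Qed.

Lemma selfpowD a b : selfpow (a + b) = (a + b).+1 ^ a.+1 * (a + b).+1 ^ b.
Proof. by rewrite /selfpow -expnD addSn. Qed.

Lemma leq_selfpow_mul a b : selfpow a * selfpow b <= selfpow (a + b).
Proof.
rewrite selfpowD {2}/selfpow expnS mulnA leq_mul ?leq_selfpow_mulS //.
by case: b => // b; rewrite leq_exp2r // ltnS leq_addl.
Qed.

Lemma ltn_selfpow_mul a b : 0 < a -> 0 < b -> selfpow a * selfpow b < selfpow (a + b).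
Proof.
move=> a_gt0 b_gt0; rewrite selfpowD {2}/selfpow expnS mulnA.
apply: (leq_ltn_trans (leq_mul (leq_selfpow_mulS a b) (leqnn _))).
by rewrite ltn_pmul2l ?expn_gt0 // ltn_exp2r // ltnS -{1}[b]add0n ltn_add2r.
Qed.

Section ProdSelfpow.
Variables (I : finType) (t : I -> nat).

Lemma leq_prod_selfpow (P : pred I) :
  \prod_(i | P i) selfpow (t i) <= selfpow (\sum_(i | P i) t i).
Proof.
elim/big_rec2: _ => // i a b _ le_ab.
by apply: leq_trans (leq_selfpow_mul _ _); rewrite leq_mul2l le_ab orbT.
Qed.

Lemma ltn_prod_selfpow : 0 < \sum_i t i -> (forall i, t i < \sum_j t j) ->
  \prod_i selfpow (t i) < selfpow (\sum_i t i).
Proof.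
move=> sum_gt0 t_lt.
have [i0 t_i0] : exists i0, 0 < t i0.
  move: sum_gt0; rewrite lt0n sum_nat_eq0 negb_forall.
  by move=> /existsP[i ti]; exists i; rewrite lt0n.
have := t_lt i0; rewrite (bigD1 i0) //= (bigD1 i0 (P := predT)) //= -{1}[t i0]addn0.
rewrite ltn_add2l => rest_gt0.
apply: (leq_ltn_trans _ (ltn_selfpow_mul t_i0 rest_gt0)).
by rewrite leq_mul2l leq_prod_selfpow orbT.
Qed.

Lemma prod_selfpow_eq M : 0 < M -> \sum_i t i <= M ->
  (\prod_i selfpow (t i) == selfpow M) = [exists i, t i == M].
Proof.
move=> M_gt0 sum_le.
have prod_le : \prod_i selfpow (t i) <= selfpow M.
  by rewrite (leq_trans (leq_prod_selfpow _)) ?leq_selfpow.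
case: existsP => [[i /eqP t_i] | no_M].
  rewrite eqn_leq prod_le (bigD1 i) //= t_i -{1}[selfpow M]muln1 leq_mul2l.
  by rewrite prodn_cond_gt0 ?orbT // => j _; apply: selfpow_gt0.
apply: ltn_eqF; have [sum_lt | sum_ge] := ltnP (\sum_i t i) M.
  by rewrite (leq_ltn_trans (leq_prod_selfpow _)) ?ltn_selfpow.
have {sum_le sum_ge}sum_eq : \sum_i t i = M by apply/eqP; rewrite eqn_leq sum_le.
rewrite -sum_eq; apply: ltn_prod_selfpow => [|i]; first by rewrite sum_eq.
rewrite ltn_neqAle sum_eq; apply/andP; split.
  by apply/eqP => t_i; apply: no_M; exists i; rewrite t_i.
by rewrite -sum_eq (bigD1 i) //= leq_addr.
Qed.

End ProdSelfpow.

Lemma sum_card_exchange (I J : finType) (P : I -> J -> bool) :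
  \sum_i #|[set j | P i j]| = \sum_j #|[set i | P i j]|.
Proof.
under eq_bigr do rewrite -sum1dep_card big_mkcond.
rewrite exchange_big; apply: eq_bigr => j _.
by rewrite -sum1dep_card [RHS]big_mkcond.
Qed.

Section DeletionCount.
Context {T : finType} {l : nat}.
Variable y : seq T.
Hypothesis size_y : size y = l.

Definition del_count (x : l.+1.-tuple T) := #|[set i : 'I_l.+1 | del_nth x i == y]|.

Lemma card_del_nth_fiber (i : 'I_l.+1) :
  #|[set x : l.+1.-tuple T | del_nth x i == y]| = #|T|.
Proof.
have le_iy : i <= size y by rewrite size_y -ltnS.
have size_ins a : size (ins_nth y i a) == l.+1 by rewrite size_ins_nth // size_y.
pose ins a : l.+1.-tuple T := Tuple (size_ins a).
have ins_inj : injective ins.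
  by move=> a b /(congr1 (fun x : l.+1.-tuple T => nth a x i)) /=; rewrite !nth_ins_nth.
rewrite -cardsT -(card_imset _ ins_inj); apply: eq_card => x; rewrite inE.
apply/eqP/imsetP => [del_x | [a _ ->]]; last exact: ins_nthK.
exists (tnth x i) => //; apply: val_inj => /=.
by rewrite -del_x (tnth_nth (tnth x i)) del_nthK // size_tuple.
Qed.

Lemma sum_del_count : \sum_x del_count x = l.+1 * #|T|.
Proof.
rewrite /del_count sum_card_exchange (eq_bigr _ (fun i _ => card_del_nth_fiber i)).
by rewrite sum_nat_const card_ord.
Qed.

Definition del_repeat (x : l.+1.-tuple T) (i : 'I_l.+1) :=
  (del_nth x i == y) && [exists j : 'I_l.+1, (j < i) && (del_nth x j == y)].

Lemma del_count_pred_le x : (del_count x).-1 <= #|[set i | del_repeat x i]|.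
Proof.
set S := [set i : 'I_l.+1 | del_nth x i == y]; set D := [set i | del_repeat x i].
have sub_DS : D \subset S by apply/subsetP => i; rewrite !inE => /andP[].
have : #|S :\: D| <= 1.
  apply/card_le1_eqP => i j; rewrite !inE /del_repeat.
  move=> /andP[+ del_i] /andP[+ del_j]; rewrite del_i del_j /= => no_i no_j.
  case: (ltngtP i j) => [lt_ij | lt_ji | /val_inj //].
  - by case/negP: no_j; apply/existsP; exists i; rewrite lt_ij del_i.
  - by case/negP: no_i; apply/existsP; exists j; rewrite lt_ji del_j.
by have := cardsID D S; rewrite (setIidPr sub_DS) /del_count -/S; lia.
Qed.

Lemma del_repeatE x0 x i : del_repeat x i -> val x = ins_nth y i (nth x0 y i.-1).
Proof.
move=> /andP[/eqP del_i /existsP[j /andP[lt_ji /eqP del_j]]].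
have lt_ix : i < size x by rewrite size_tuple.
have x_i : nth x0 x i = nth x0 x i.-1.
  by apply: (del_nth_eq_nth_pred x0 (j := j)); rewrite ?lt_ji ?lt_ix ?del_i ?del_j.
rewrite -[val x](del_nthK x0 lt_ix) del_i x_i -del_i nth_del_nth //= /bump.
by rewrite (_ : i <= i.-1 = false) ?add0n //; lia.
Qed.

Lemma card_del_repeat_at (i : 'I_l.+1) : #|[set x | del_repeat x i]| <= (0 < i).
Proof.
have [i0 | i_gt0] := posnP i.
  rewrite leqn0 cards_eq0; apply/eqP/setP => x; rewrite !inE /del_repeat i0.
  by rewrite andbC; case: existsP => // [[j]]; rewrite ltn0.
apply/card_le1_eqP => x1 x2; rewrite !inE => rep1 rep2; apply/val_inj.
by rewrite (del_repeatE (tnth x1 i) rep1) (del_repeatE (tnth x1 i) rep2).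
Qed.

Lemma sum_del_count_pred_le : \sum_x (del_count x).-1 <= l.
Proof.
apply: (@leq_trans (\sum_x #|[set i | del_repeat x i]|)).
  by apply: leq_sum => x _; apply: del_count_pred_le.
rewrite sum_card_exchange; apply: (@leq_trans (\sum_(i < l.+1) (0 < i : nat))).
  by apply: leq_sum => i _; apply: card_del_repeat_at.
by rewrite big_ord_recl /= add0n (eq_bigr (fun _ => 1%N)) // sum_nat_const card_ord muln1.
Qed.

Lemma constant_of_del_count x : del_count x = l.+1 -> constant y.
Proof.
move=> count_x; have x0 := tnth x ord0.
have del_all (i : 'I_l.+1) : del_nth x i = y.
  have : [set i : 'I_l.+1 | del_nth x i == y] = [set: 'I_l.+1].
    by apply/eqP; rewrite eqEcard subsetT cardsT card_ord /=; exact: eq_leq (esym count_x).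
  by move=> /setP /(_ i); rewrite !inE => /eqP.
have x_const k : k <= l -> nth x0 x k = nth x0 x 0.
  elim: k => [//|k IHk] lt_kl; rewrite -(IHk (ltnW lt_kl)).
  apply: (del_nth_eq_nth_pred x0 (j := 0)); first by rewrite size_tuple.
  by rewrite (del_all ord0) (del_all (Ordinal (lt_kl : k.+1 < l.+1))).
apply/(constantP x0); exists (nth x0 x 0); rewrite size_y.
apply: (@eq_from_nth _ x0); first by rewrite size_nseq.
move=> k; rewrite size_y => lt_kl; rewrite nth_nseq lt_kl -(del_all ord0).
by rewrite nth_del_nth ?size_tuple //= x_const.
Qed.

Lemma del_count_nseq b : y = nseq l b -> del_count (nseq_tuple l.+1 b) = l.+1.
Proof.
move=> y_eq; rewrite /del_count -[RHS]card_ord -cardsT; apply: eq_card => i.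
rewrite !inE y_eq; apply/eqP/(@eq_from_nth _ b).
  by rewrite size_del_nth ?size_nseq.
by move=> k _; rewrite nth_del_nth ?size_nseq // !nth_nseq !if_same.
Qed.

Lemma prod_del_count_le : \prod_x del_count x ^ del_count x <= l.+1 ^ l.+1.
Proof.
under eq_bigr do rewrite expn_selfpow.
apply: leq_trans (leq_prod_selfpow _ _) _.
by rewrite leq_selfpow sum_del_count_pred_le.
Qed.

Lemma prod_del_count_eq : 0 < l ->
  (\prod_x del_count x ^ del_count x == l.+1 ^ l.+1) = constant y.
Proof.
move=> l_gt0; under eq_bigr do rewrite expn_selfpow.
rewrite -[l.+1 ^ l.+1]/(selfpow l) prod_selfpow_eq ?sum_del_count_pred_le //.
apply/existsP/idP => [[x /eqP count_x] | const_y].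
  apply: (constant_of_del_count (x := x)).
  by move: count_x l_gt0; case: (del_count x) => [/= <- | k /= ->].
have a : T by case: y size_y l_gt0 => [<- // | a _ _ _]; exact: a.
have [b y_eq] := constantP a _ const_y.
by exists (nseq_tuple l.+1 b); rewrite del_count_nseq // y_eq size_y.
Qed.

End DeletionCount.

Lemma emb_del_count q l (x : l.+1.-tuple 'I_q) (y : (l.+1 - 1).-tuple 'I_q) :
  emb x y = del_count (val y) x.
Proof. by rewrite (emb_del_nth x y) // subn1. Qed.

Local Open Scope ring_scope.

Section Entropy.
Variable R : realType.

Lemma ln_prod (I : finType) (f : I -> R) : (forall i, 0 < f i) ->
  ln (\prod_i f i) = \sum_i ln (f i).
Proof.
move=> f_gt0; suff [] : ln (\prod_i f i) = \sum_i ln (f i) /\ 0 < \prod_i f i by [].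
apply: (big_rec2 (fun p s => ln p = s /\ 0 < p)) => [|i p s _ [<- p_gt0]].
  by rewrite ln1.
by rewrite lnM ?posrE // mulr_gt0.
Qed.

Lemma entropy_nat_weights (I : finType) (e : I -> nat) (N : nat) :
  (0 < N)%N -> (\sum_i e i)%N = N ->
  - \sum_i (if (e i)%:R / N%:R == 0 :> R then 0
            else (e i)%:R / N%:R * log2 ((e i)%:R / N%:R))
  = log2 (N%:R : R) - ln ((\prod_i e i ^ e i)%:R : R) / (N%:R * ln 2).
Proof.
move=> N_gt0 sum_e.
have ln2_gt0 : 0 < ln (2 : R) by rewrite ln_gt0 // ltr1n.
have NR_gt0 : 0 < (N%:R : R) by rewrite ltr0n.
have term_eq i : (if (e i)%:R / N%:R == 0 :> R then 0
                  else (e i)%:R / N%:R * log2 ((e i)%:R / N%:R))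
    = (ln ((e i ^ e i)%:R) - (e i)%:R * ln (N%:R : R)) / (N%:R * ln 2).
  have [-> | e_gt0] := posnP (e i); first by rewrite mul0r eqxx expn0 ln1 mul0r subrr mul0r.
  have eR_gt0 : 0 < ((e i)%:R : R) by rewrite ltr0n.
  rewrite mulf_eq0 invr_eq0 !pnatr_eq0 !gtn_eqF //=.
  rewrite natrX lnXn // /log2 ln_div ?posrE // -mulr_natl.
  by field; rewrite !gt_eqF.
rewrite (eq_bigr _ (fun i _ => term_eq i)) -mulr_suml big_split /= sumrN.
rewrite natr_prod -ln_prod => [|i]; last by rewrite ltr0n expn_gt0; case: (e i).
rewrite -mulr_suml -natr_sum sum_e /log2.
by field; rewrite !gt_eqF.
Qed.

Lemma ler_sub_ln_nat (c D : R) (m n : nat) : 0 < D -> (0 < m)%N -> (0 < n)%N ->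
  (c - ln n%:R / D <= c - ln m%:R / D) = (m <= n)%N.
Proof.
move=> D_gt0 m_gt0 n_gt0.
by rewrite lerD2l lerN2 ler_pM2r ?invr_gt0 // ler_ln ?posrE ?ltr0n // ler_nat.
Qed.

Lemma eqr_sub_ln_nat (c D : R) (m n : nat) : 0 < D -> (0 < m)%N -> (0 < n)%N ->
  (c - ln n%:R / D == c - ln m%:R / D) = (n == m).
Proof.
by move=> *; rewrite eq_le !ler_sub_ln_nat // eqn_leq andbC.
Qed.

Lemma Hin_del1 q l (y : (l.+1 - 1).-tuple 'I_q) : (0 < q)%N ->
  Hin R y = log2 ((l.+1 * q)%:R : R) -
    ln ((\prod_(x : l.+1.-tuple 'I_q) del_count (val y) x ^ del_count (val y) x)%N%:R : R) /
      ((l.+1 * q)%:R * ln 2).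
Proof.
move=> q_gt0; have size_y : size (val y) = l by rewrite size_tuple subn1.
have sum_count : (\sum_(x : l.+1.-tuple 'I_q) del_count (val y) x = l.+1 * q)%N.
  by rewrite sum_del_count // card_ord.
have post_eq x : post R y x = (del_count (val y) x)%:R / (l.+1 * q)%:R.
  rewrite /post /delPr bin1 -mulr_suml -natr_sum.
  rewrite (eq_bigr _ (fun x _ => emb_del_count x y)) sum_count emb_del_count natrM.
  by field; rewrite nat1r !pnatr_eq0 -lt0n q_gt0.
rewrite /Hin; under eq_bigr do rewrite post_eq.
by apply: entropy_nat_weights; rewrite ?muln_gt0.
Qed.

End Entropy.

Theorem theorem6 (R : realType) (q n : nat) (hq : (2 <= q)%N) (hn : (2 <= n)%N) :
  (forall y : (n - 1).-tuple 'I_q,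
      log2 ((n * q)%:R : R) - log2 (n%:R : R) / q%:R <= Hin R y) /\
  (forall y : (n - 1).-tuple 'I_q,
      Hin R y = log2 ((n * q)%:R : R) - log2 (n%:R : R) / q%:R <->
      constant (val y)).
Proof.
case: n hn => [//|l]; rewrite ltnS => l_gt0.
have q_gt0 : (0 < q)%N by apply: leq_trans hq.
set D : R := (l.+1 * q)%:R * ln 2.
have D_gt0 : 0 < D by rewrite mulr_gt0 ?ltr0n ?muln_gt0 ?ln_gt0 ?ltr1n.
have bound_eq : log2 (l.+1 * q)%:R - log2 l.+1%:R / q%:R =
    log2 (l.+1 * q)%:R - ln (l.+1 ^ l.+1)%N%:R / D.
  rewrite natrX lnXn ?ltr0n // /log2 /D natrM -mulr_natl.
  by field; rewrite nat1r !pnatr_eq0 -lt0n q_gt0 gt_eqF // ln_gt0 // ltr1n.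
have size_y (y : (l.+1 - 1).-tuple 'I_q) : size (val y) = l by rewrite size_tuple subn1.
have prod_gt0 (y : (l.+1 - 1).-tuple 'I_q) :
    (0 < \prod_(x : l.+1.-tuple 'I_q) del_count (val y) x ^ del_count (val y) x)%N.
  by rewrite prodn_gt0 // => x; rewrite expn_gt0; case: del_count.
split=> y; rewrite Hin_del1 // bound_eq -/D.
  by rewrite ler_sub_ln_nat ?prod_gt0 ?expn_gt0 // (prod_del_count_le (size_y y)).
apply: iff_trans (rwP eqP) _.
by rewrite eqr_sub_ln_nat ?prod_gt0 ?expn_gt0 // (prod_del_count_eq (size_y y) l_gt0).
Qed.
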